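(* Fix $\theta\in(0,1)$ and an integer $N\ge 1$ with $N \le \frac{1}{4\theta(1-\theta)}-1$. Then there exists a temperature $\tilde\tau>0$ (depending on $N$ and $\theta$) such that $$\mathrm{MSE}\big(\hat\nabla^{\mathsf{grad}}_{\tilde\tau,N}\big) < \mathrm{MSE}\big(\hat\nabla^{\mathsf{RF}}_{N}\big).$$ Moreover, for every fixed $N\ge1$ and $\theta=1/k$ with $k\to\infty$, one has $\mathrm{MSE}(\hat\nabla^{\mathsf{RF}}_{N})=\Omega(k)$, while for each such $\theta$ there is $\tilde\tau>0$ with $\mathrm{MSE}(\hat\nabla^{\mathsf{grad}}_{\tilde\tau,N})<4$. The same holds for $\theta=1-1/k$, $k\to\infty$.
   Context: Binary action setting: actions $A\in\{-1,1\}$ are drawn from the policy $\pi_\theta$ with $\pi_\theta(-1)=\theta$, $\pi_\theta(1)=1-\theta$, for a parameter $\theta\in(0,1)$. Let $G(a)=a$ and $H(\theta)=\mathbb{E}_{A\sim\pi_\theta}[G(A)]$, so the true gradient is $\nabla_\theta H(\theta)=\frac{d}{d\theta}H(\theta)$. REINFORCE estimator: given $N$ i.i.d. samples $A_1,\dots,A_N\sim\pi_\theta$, $\hat\nabla^{\mathsf{RF}}_N=\frac1N\sum_{i=1}^N G(A_i)\,\nabla_\theta\log\pi_\theta(A_i)$. Smoothed pathwise estimator: for temperature $\tau>0$ and $U\sim\mathrm{Uniform}[0,1]$ let $h_\tau(U,\theta)=\frac{\exp((U-\theta)/\tau)-1}{\exp((U-\theta)/\tau)+1}$ (a smoothing of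 $2\mathbf{1}\{U>\theta\}-1$, which has the law of $A$). Given $N$ i.i.d. $U_1,\dots,U_N\sim\mathrm{Uniform}[0,1]$, $\hat\nabla^{\mathsf{grad}}_{\tau,N}=\frac1N\sum_{i=1}^N \nabla_\theta G(h_\tau(U_i,\theta))=\frac1N\sum_{i=1}^N \frac{\partial}{\partial\theta}h_\tau(U_i,\theta)$. For an estimator $\hat\nabla$, $\mathrm{MSE}(\hat\nabla)=\mathbb{E}\big[(\hat\nabla-\nabla_\theta H(\theta))^2\big]$. *)

From Stdlib Require Import Reals List.
From Coquelicot Require Import Coquelicot.
Import ListNotations.
Open Scope R_scope.

Definition G (a : R) : R := a.

(* Policy pi_theta on actions {-1, 1}: pi_theta(-1) = theta, pi_theta(1) = 1 - theta. *)
Definition pi (t a : R) : R := if Req_EM_T a (-1) then t else 1 - t.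

Definition H (t : R) : R := pi t (-1) * G (-1) + pi t 1 * G 1.

Definition true_grad (theta : R) : R := Derive H theta.

(* Expectation of f(A_1,...,A_n) for A_i i.i.d. ~ pi_theta (finite sum over {-1,1}^n). *)
Fixpoint E_pi (theta : R) (n : nat) (f : list R -> R) : R :=
  match n with
  | O => f []
  | S m => pi theta (-1) * E_pi theta m (fun l => f ((-1) :: l))
           + pi theta 1 * E_pi theta m (fun l => f (1 :: l))
  end.

(* Expectation of f(U_1,...,U_n) for U_i i.i.d. ~ Uniform[0,1]
   (iterated integral over [0,1]^n). *)
Fixpoint E_unif (n : nat) (f : list R -> R) : R :=
  match n with
  | O => f []
  | S m => RInt (fun u => E_unif m (fun l => f (u :: l))) 0 1
  end.

Definition list_sum (l : list R) : R := fold_right Rplus 0 l.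

Definition RF_est (N : nat) (theta : R) (A : list R) : R :=
  / INR N * list_sum (map (fun a => G a * Derive (fun t => ln (pi t a)) theta) A).

Definition h (tau u t : R) : R := (exp ((u - t) / tau) - 1) / (exp ((u - t) / tau) + 1).

Definition grad_est (tau : R) (N : nat) (theta : R) (U : list R) : R :=
  / INR N * list_sum (map (fun u => Derive (fun t => G (h tau u t)) theta) U).

Definition MSE_RF (N : nat) (theta : R) : R :=
  E_pi theta N (fun A => (RF_est N theta A - true_grad theta) ^ 2).

Definition MSE_grad (tau : R) (N : nat) (theta : R) : R :=
  E_unif N (fun U => (grad_est tau N theta U - true_grad theta) ^ 2).

(* Both estimators average N i.i.d. copies of a per-sample term psi, and the
   true gradient is -2, so each MSE equals (2 + E psi)^2 + Var psi / N.
   For REINFORCE the score term is unbiased with E psi^2 = 1/(theta (1-theta)),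
   hence MSE = (1/(theta (1-theta)) - 4) / N: this is at least 4 exactly under
   the hypothesis on N, and grows linearly in k for theta = 1/k or 1 - 1/k.
   For the pathwise estimator at temperature 1, psi(u) = -2e/(e+1)^2 with
   e = exp(u - theta) in [1/3, 3], so psi lies in [-1/2, -1/4]; then the bias
   term is at most 49/16 and the variance at most 3/16, whence MSE < 4 for
   every theta and N. *)

From Stdlib Require Import Reals Lra Lia Psatz FunctionalExtensionality List.
From Coquelicot Require Import Coquelicot.
Open Scope R_scope.

Fixpoint iid_expect (E1 : (R -> R) -> R) (n : nat) (f : list R -> R) : R :=
  match n with
  | O => f nil
  | S m => E1 (fun x => iid_expect E1 m (fun l => f (x :: l)))
  end.

Section IidSquaredSum.

Variables (E1 : (R -> R) -> R) (psi : R -> R) (m1 m2 : R).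

Hypothesis E1_quadratic :
  forall A B C, E1 (fun x => A + B * psi x + C * psi x ^ 2) = A + B * m1 + C * m2.

Lemma iid_expect_square_sum (k : R) (n : nat) (c : R) :
  iid_expect E1 n (fun l => (c + k * list_sum (map psi l)) ^ 2)
  = c ^ 2 + 2 * c * INR n * k * m1 + INR n * k ^ 2 * m2
    + INR n * (INR n - 1) * k ^ 2 * m1 ^ 2.
Proof.
  revert c; induction n as [|n IHn]; intro c; simpl iid_expect.
  - unfold list_sum; simpl. ring.
  - set (A := c ^ 2 + 2 * c * INR n * k * m1 + INR n * k ^ 2 * m2
              + INR n * (INR n - 1) * k ^ 2 * m1 ^ 2).
    set (B := 2 * c * k + 2 * INR n * k ^ 2 * m1).
    transitivity (E1 (fun x => A + B * psi x + k ^ 2 * psi x ^ 2)).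
    + f_equal. apply functional_extensionality. intro x.
      transitivity
        (iid_expect E1 n (fun l => (c + k * psi x + k * list_sum (map psi l)) ^ 2)).
      * f_equal. apply functional_extensionality. intro l.
        unfold list_sum; simpl. ring.
      * rewrite IHn. unfold A, B. ring.
    + rewrite E1_quadratic. unfold A, B. rewrite S_INR. ring.
Qed.

Lemma iid_expect_square_mean (n : nat) (c : R) : (1 <= n)%nat ->
  iid_expect E1 n (fun l => (c + / INR n * list_sum (map psi l)) ^ 2)
  = (c + m1) ^ 2 + (m2 - m1 ^ 2) / INR n.
Proof.
  intro Hn. rewrite iid_expect_square_sum.
  assert (0 < INR n) by (apply lt_0_INR; lia).
  field. lra.
Qed.

End IidSquaredSum.

Lemma pi_m1 (t : R) : pi t (-1) = t.
Proof. unfold pi; destruct (Req_EM_T (-1) (-1)); lra. Qed.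

Lemma pi_1 (t : R) : pi t 1 = 1 - t.
Proof. unfold pi; destruct (Req_EM_T 1 (-1)); lra. Qed.

Lemma E_pi_iid (theta : R) (n : nat) (f : list R -> R) :
  E_pi theta n f = iid_expect (fun g => theta * g (-1) + (1 - theta) * g 1) n f.
Proof.
  revert f; induction n as [|n IHn]; intro f; simpl; [reflexivity|].
  now rewrite pi_m1, pi_1, !IHn.
Qed.

Lemma E_unif_iid (n : nat) (f : list R -> R) :
  E_unif n f = iid_expect (fun g => RInt g 0 1) n f.
Proof.
  revert f; induction n as [|n IHn]; intro f; simpl; [reflexivity|].
  f_equal. apply functional_extensionality. intro u. apply IHn.
Qed.

Lemma RInt_quadratic (psi : R -> R) (a b A B C : R) :
  ex_RInt psi a b -> ex_RInt (fun x => psi x ^ 2) a b ->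
  RInt (fun x => A + B * psi x + C * psi x ^ 2) a b
  = (b - a) * A + B * RInt psi a b + C * RInt (fun x => psi x ^ 2) a b.
Proof.
  intros Hpsi Hpsi2. apply is_RInt_unique.
  apply (is_RInt_plus (V := R_NormedModule)); [apply (is_RInt_plus (V := R_NormedModule))|].
  - apply (is_RInt_const (V := R_NormedModule)).
  - apply (is_RInt_scal (V := R_NormedModule)).
    now apply (RInt_correct (V := R_CompleteNormedModule)).
  - apply (is_RInt_scal (V := R_NormedModule)).
    now apply (RInt_correct (V := R_CompleteNormedModule)).
Qed.

Lemma RInt_between_consts (f : R -> R) (a b lo hi : R) :
  a <= b -> ex_RInt f a b -> (forall x, a < x < b -> lo <= f x <= hi) ->
  (b - a) * lo <= RInt f a b <= (b - a) * hi.
Proof.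
  intros Hab Hf Hbounds.
  rewrite <- !(RInt_const (V := R_CompleteNormedModule)).
  split; apply RInt_le; auto; try apply ex_RInt_const;
    intros x Hx; apply Hbounds, Hx.
Qed.

Lemma true_grad_eq (theta : R) : true_grad theta = -2.
Proof.
  unfold true_grad. rewrite (Derive_ext H (fun t => 1 - 2 * t)).
  - apply is_derive_unique. auto_derive; auto; ring.
  - intro t. unfold H, G. rewrite pi_m1, pi_1. ring.
Qed.

Lemma Derive_ln_pi_m1 (t : R) : 0 < t -> Derive (fun s => ln (pi s (-1))) t = / t.
Proof.
  intro Ht. rewrite (Derive_ext _ ln) by (intro; now rewrite pi_m1).
  apply is_derive_unique. auto_derive; [lra | field; lra].
Qed.

Lemma Derive_ln_pi_1 (t : R) : t < 1 -> Derive (fun s => ln (pi s 1)) t = - / (1 - t).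
Proof.
  intro Ht. rewrite (Derive_ext _ (fun s => ln (1 - s))) by (intro; now rewrite pi_1).
  apply is_derive_unique. auto_derive; [lra | field; lra].
Qed.

Lemma MSE_RF_eq (N : nat) (theta : R) : 0 < theta < 1 -> (1 <= N)%nat ->
  MSE_RF N theta = (1 / (theta * (1 - theta)) - 4) / INR N.
Proof.
  intros Ht HN. unfold MSE_RF. rewrite E_pi_iid.
  set (psi := fun a => G a * Derive (fun t => ln (pi t a)) theta).
  replace (fun A => (RF_est N theta A - true_grad theta) ^ 2)
    with (fun A => (2 + / INR N * list_sum (map psi A)) ^ 2)
    by (apply functional_extensionality; intro A;
        unfold RF_est; rewrite true_grad_eq; fold psi; ring).
  assert (Hmoments : forall A B C,
    theta * (A + B * psi (-1) + C * psi (-1) ^ 2) + (1 - theta) * (A + B * psi 1 + C * psi 1 ^ 2)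
    = A + B * (-2) + C * (1 / (theta * (1 - theta)))).
  { intros A B C. unfold psi, G.
    rewrite Derive_ln_pi_m1, Derive_ln_pi_1 by lra. field. lra. }
  rewrite (iid_expect_square_mean _ psi _ _ Hmoments N 2 HN).
  assert (INR N <> 0) by (apply not_0_INR; lia).
  field. lra.
Qed.

Lemma MSE_RF_one_minus (N : nat) (theta : R) : 0 < theta < 1 -> (1 <= N)%nat ->
  MSE_RF N (1 - theta) = MSE_RF N theta.
Proof.
  intros Ht HN. rewrite !MSE_RF_eq by (auto; lra).
  now replace ((1 - theta) * (1 - (1 - theta))) with (theta * (1 - theta)) by ring.
Qed.

Lemma MSE_RF_ge_4 (N : nat) (theta : R) : 0 < theta < 1 -> (1 <= N)%nat ->
  INR N <= 1 / (4 * theta * (1 - theta)) - 1 -> 4 <= MSE_RF N theta.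
Proof.
  intros Ht HN Hb. rewrite MSE_RF_eq by auto.
  assert (Hn : 1 <= INR N) by (apply (le_INR 1); auto).
  replace (1 / (4 * theta * (1 - theta))) with (1 / (theta * (1 - theta)) / 4)
    in Hb by (field; nra).
  apply Rmult_le_reg_r with (INR N); [lra|].
  unfold Rdiv at 1. rewrite Rmult_assoc, Rinv_l by lra. lra.
Qed.

Lemma inv_INR_in_01 (k : nat) : (2 <= k)%nat -> 0 < 1 / INR k < 1.
Proof.
  intro Hk. pose proof (le_INR 2 k Hk) as Hkk. simpl in Hkk.
  unfold Rdiv. rewrite Rmult_1_l. split.
  - apply Rinv_0_lt_compat. lra.
  - rewrite <- Rinv_1. apply Rinv_lt_contravar; lra.
Qed.

Lemma MSE_RF_inv_ge_linear (N k : nat) : (1 <= N)%nat -> (8 <= k)%nat ->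
  / (2 * INR N) * INR k <= MSE_RF N (1 / INR k).
Proof.
  intros HN Hk.
  assert (Hn : 1 <= INR N) by (apply (le_INR 1); auto).
  pose proof (le_INR 8 k Hk) as Hkk. simpl in Hkk.
  rewrite MSE_RF_eq by (auto; apply inv_INR_in_01; lia).
  replace (1 / (1 / INR k * (1 - 1 / INR k))) with (INR k + INR k / (INR k - 1))
    by (field; lra).
  assert (0 <= INR k / (INR k - 1)) by (apply Rdiv_le_0_compat; lra).
  replace (/ (2 * INR N) * INR k) with (INR k / 2 / INR N) by (field; lra).
  apply Rmult_le_compat_r; [left; apply Rinv_0_lt_compat|]; lra.
Qed.

Definition h_slope (tau u t : R) : R :=
  - 2 * exp ((u - t) / tau) / (tau * (exp ((u - t) / tau) + 1) ^ 2).

Lemma is_derive_h (tau u t : R) : tau <> 0 -> is_derive (h tau u) t (h_slope tau u t).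
Proof.
  intros Htau. unfold h, h_slope.
  assert (He : 0 < exp ((u - t) / tau)) by apply exp_pos.
  auto_derive; change ((u + - t) * / tau) with ((u - t) / tau).
  - lra.
  - field. lra.
Qed.

Lemma ex_RInt_h_slope_pow (tau t a b : R) (p : nat) : tau <> 0 ->
  ex_RInt (fun u => h_slope tau u t ^ p) a b.
Proof.
  intros Htau. apply (ex_RInt_continuous (V := R_CompleteNormedModule)). intros u _.
  apply (ex_derive_continuous (K := R_AbsRing) (V := R_NormedModule)).
  assert (He : 0 < exp ((u - t) / tau)) by apply exp_pos.
  unfold h_slope. auto_derive. change ((u + - t) * / tau) with ((u - t) / tau).
  apply Rmult_integral_contrapositive_currified; [exact Htau | nra].
Qed.

Lemma logistic_slope_bounds (x : R) : -1 <= x <= 1 ->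
  1 / 4 <= 2 * exp x / (exp x + 1) ^ 2 <= 1 / 2.
Proof.
  intros Hx.
  assert (Hup : exp x <= 3).
  { apply Rle_trans with (exp 1); [|exact exp_le_3].
    destruct (Req_dec x 1) as [->|]; [lra|]. left; apply exp_increasing; lra. }
  assert (Hlow : 1 / 3 <= exp x).
  { assert (Hneg : exp (- x) <= 3).
    { apply Rle_trans with (exp 1); [|exact exp_le_3].
      destruct (Req_dec (- x) 1) as [->|]; [lra|]. left; apply exp_increasing; lra. }
    rewrite exp_Ropp in Hneg.
    assert (0 < exp x) by apply exp_pos.
    apply Rmult_le_reg_r with (/ exp x); [now apply Rinv_0_lt_compat|].
    rewrite Rinv_r by lra. lra. }
  set (e := exp x) in *.
  assert (Hd : 0 < (e + 1) ^ 2) by nra.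
  assert (Hq : 2 * e / (e + 1) ^ 2 * (e + 1) ^ 2 = 2 * e) by (field; lra).
  set (q := 2 * e / (e + 1) ^ 2) in *.
  assert (0 <= (3 - e) * (e - 1 / 3)) by (apply Rmult_le_pos; lra).
  assert (0 <= (e - 1) ^ 2) by apply pow2_ge_0.
  split; nra.
Qed.

Lemma h_slope_1_bounds (u t : R) : 0 <= u <= 1 -> 0 < t < 1 ->
  - (1 / 2) <= h_slope 1 u t <= - (1 / 4).
Proof.
  intros Hu Ht.
  replace (h_slope 1 u t) with (- (2 * exp (u - t) / (exp (u - t) + 1) ^ 2))
    by (unfold h_slope; replace ((u - t) / 1) with (u - t) by field; field;
        pose proof (exp_pos (u - t)); nra).
  pose proof (logistic_slope_bounds (u - t) ltac:(lra)). lra.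
Qed.

Lemma MSE_grad_lt_4 (N : nat) (theta : R) : 0 < theta < 1 -> (1 <= N)%nat ->
  MSE_grad 1 N theta < 4.
Proof.
  intros Ht HN. unfold MSE_grad. rewrite E_unif_iid.
  set (psi := fun u => h_slope 1 u theta).
  replace (fun U => (grad_est 1 N theta U - true_grad theta) ^ 2)
    with (fun U => (2 + / INR N * list_sum (map psi U)) ^ 2).
  2:{ apply functional_extensionality; intro U. unfold grad_est.
      rewrite true_grad_eq, (map_ext (fun u => Derive (fun t => G (h 1 u t)) theta) psi).
      - ring.
      - intro u. apply is_derive_unique, is_derive_h. lra. }
  assert (Hpsi : ex_RInt psi 0 1).
  { apply (ex_RInt_ext (fun u => psi u ^ 1)); [intros; apply pow_1|].
    apply ex_RInt_h_slope_pow. lra. }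
  assert (Hpsi2 : ex_RInt (fun u => psi u ^ 2) 0 1) by (apply ex_RInt_h_slope_pow; lra).
  rewrite (iid_expect_square_mean _ psi (RInt psi 0 1) (RInt (fun u => psi u ^ 2) 0 1))
    by (auto; intros; rewrite RInt_quadratic by auto; ring).
  assert (Hpsi_bounds : forall u, 0 < u < 1 -> - (1 / 2) <= psi u <= - (1 / 4))
    by (intros; apply h_slope_1_bounds; lra).
  assert (Hm1 := RInt_between_consts psi 0 1 _ _ ltac:(lra) Hpsi Hpsi_bounds).
  assert (Hm2 : (1 - 0) * 0 <= RInt (fun u => psi u ^ 2) 0 1 <= (1 - 0) * (1 / 4)).
  { apply RInt_between_consts; [lra | exact Hpsi2|].
    intros u Hu. pose proof (Hpsi_bounds u Hu). nra. }
  set (m1 := RInt psi 0 1) in *. set (m2 := RInt (fun u => psi u ^ 2) 0 1) in *.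
  assert (Hn : 1 <= INR N) by (apply (le_INR 1); auto).
  assert (Hw : 0 < / INR N <= 1)
    by (split; [apply Rinv_0_lt_compat | rewrite <- Rinv_1; apply Rinv_le_contravar]; lra).
  assert (Hbias : (2 + m1) ^ 2 <= 49 / 16) by nra.
  assert (Hvar : (m2 - m1 ^ 2) / INR N <= 3 / 16).
  { assert (0 <= (3 / 16 - (m2 - m1 ^ 2)) * / INR N) by (apply Rmult_le_pos; nra).
    unfold Rdiv. nra. }
  lra.
Qed.

Theorem theorem1 :
  (* Part 1 *)
  (forall (theta : R) (N : nat),
      0 < theta < 1 -> (1 <= N)%nat ->
      INR N <= 1 / (4 * theta * (1 - theta)) - 1 ->
      exists tau : R, 0 < tau /\ MSE_grad tau N theta < MSE_RF N theta)
  /\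
  (* Part 2: theta = 1/k, k -> infinity *)
  (forall N : nat, (1 <= N)%nat ->
      (exists c : R, 0 < c /\ exists K : nat, forall k : nat, (K <= k)%nat ->
          c * INR k <= MSE_RF N (1 / INR k))
      /\ (forall k : nat, (2 <= k)%nat ->
          exists tau : R, 0 < tau /\ MSE_grad tau N (1 / INR k) < 4))
  /\
  (* Part 3: theta = 1 - 1/k, k -> infinity *)
  (forall N : nat, (1 <= N)%nat ->
      (exists c : R, 0 < c /\ exists K : nat, forall k : nat, (K <= k)%nat ->
          c * INR k <= MSE_RF N (1 - 1 / INR k))
      /\ (forall k : nat, (2 <= k)%nat ->
          exists tau : R, 0 < tau /\ MSE_grad tau N (1 - 1 / INR k) < 4)).
Proof.
  assert (Hc : forall N, (1 <= N)%nat -> 0 < / (2 * INR N)).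
  { intros N HN. apply Rinv_0_lt_compat. apply (le_INR 1) in HN. simpl in HN. lra. }
  split; [|split].
  - intros theta N Ht HN Hb. exists 1. split; [lra|].
    apply Rlt_le_trans with 4; [apply MSE_grad_lt_4 | apply MSE_RF_ge_4]; auto.
  - intros N HN. split.
    + exists (/ (2 * INR N)). split; [auto|].
      exists 8%nat. intros k Hk. now apply MSE_RF_inv_ge_linear.
    + intros k Hk. exists 1. split; [lra|].
      apply MSE_grad_lt_4; auto. now apply inv_INR_in_01.
  - intros N HN. split.
    + exists (/ (2 * INR N)). split; [auto|].
      exists 8%nat. intros k Hk.
      rewrite MSE_RF_one_minus by (auto; apply inv_INR_in_01; lia).
      now apply MSE_RF_inv_ge_linear.
    + intros k Hk. exists 1. split; [lra|].
      apply MSE_grad_lt_4; auto. pose proof (inv_INR_in_01 k Hk). lra.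
Qed.
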